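(* Let $f$ be a DNF with $k$ terms and let $y\in\{0,1\}^n$ satisfy $f_{>\tau}$ and not $f_{\le\tau}$ ($\tau=1000k$). Fix any permutation $\pi$ and let $z_0,z_1,\dots$ be the sweep process started at $y$. Let $i$ be such that $(z_i)_a=y_a$ for all $a\in P(y)$, and let $U_i$ be the set of unanimous indices of $\mathcal{T}_f(z_i)$. Then $f(z_i^{\oplus j})=0$ for all $j\in U_i\setminus P(y)$.
   Context: Terms are sets of literals, a DNF is a set of terms; $g_{\le L}$ / $g_{>L}$ are the sub-DNFs of terms of length $\le L$ / $>L$. $\mathcal{T}_f(x)$ is the set of terms of $f$ satisfied by $x$. Protected set $P(y)$: for each term $T\in f$ not satisfied by $y$, take the literal of $T$ with smallest index not satisfied by $y$; $P(y)$ is the set of these indices. Unanimous indices of a set of terms $\mathcal{T}$: all $i$ such that every term of $\mathcal{T}$ contains $x_i$, or every term of $\mathcal{T}$ contains $\overline{x_i}$. $x^{\oplus j}$ is $x$ with bit $j$ flipped. Sweep process: given $y$ with $f(y)=1$ and a permutation $\pi$ listing $[n]$ as $\pi(0),\dots,\pi(n-1)$, $z_0=y$, and $z_{t+1}=z_t^{\oplus\pi(t)}$ if $f(z_t^{\oplus\pi(t)})=1$, else $z_{t+1}=z_t$. *)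

From mathcomp Require Import all_boot all_fingroup.
Set Implicit Arguments. Unset Strict Implicit. Unset Printing Implicit Defensive.

(* A literal over variables x_0..x_{n-1}: (i, true) is x_i, (i, false) is ~x_i. *)
Definition literal (n : nat) := ('I_n * bool)%type.
Definition term (n : nat) := {set literal n}.
Definition dnf (n : nat) := {set term n}.
Definition point (n : nat) := {ffun 'I_n -> bool}.

Section Defs.
Variable n : nat.
Implicit Types (f : dnf n) (T : term n) (x y : point n) (l : literal n).

Definition lit_sat x l : bool := x l.1 == l.2.
Definition term_sat x T : bool := [forall l in T, lit_sat x l].
Definition dnf_eval f x : bool := [exists T in f, term_sat x T].

Definition dnf_le f (L : nat) : dnf n := [set T in f | #|T| <= L].
Definition dnf_gt f (L : nat) : dnf n := [set T in f | L < #|T|].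

Definition sat_terms f x : {set term n} := [set T in f | term_sat x T].

Definition protected f y : {set 'I_n} :=
  [set a : 'I_n | [exists T in f,
     [&& ~~ term_sat y T,
         [exists b : bool, ((a, b) \in T) && ~~ lit_sat y (a, b)] &
         [forall l in T, ~~ lit_sat y l ==> (a <= l.1)]]]].

Definition unanimous (Ts : {set term n}) : {set 'I_n} :=
  [set i : 'I_n | [forall T in Ts, (i, true) \in T]
               || [forall T in Ts, (i, false) \in T]].

Definition flip x (j : 'I_n) : point n :=
  [ffun a => if a == j then ~~ x a else x a].

(* Sweep process: z_0 = y, z_{t+1} = z_t^{(+) pi(t)} if f accepts it, else z_t
   (for t < n; the process has states z_0, ..., z_n, and we keep it
   constant afterwards). *)
Fixpoint sweep f (pi : {perm 'I_n}) y (t : nat) : point n :=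
  match t with
  | 0 => y
  | t'.+1 =>
      let z := sweep f pi y t' in
      match insub t' : option 'I_n with
      | Some s => let z' := flip z (pi s) in if dnf_eval f z' then z' else z
      | None => z
      end
  end.
End Defs.

From mathcomp Require Import all_boot all_fingroup.

(* If [x] agrees with [y] on [P(y)], every term of [f] satisfied by [x] is
   satisfied by [y]: a term falsified by [y] is falsified at its least
   falsified index, which is protected.  Now let [z] be the sweep state and
   [j] a unanimous, unprotected index.  Unanimity puts the literal
   [(j, z j)] into every term satisfied by [z], so [y j = z j].  If the flip
   [z^j] satisfied a term [T], then so would [y] (as [j] is unprotected);
   hence [T] has no literal on [j], so [z] satisfies [T] as well, and
   unanimity puts [(j, z j)] into [T] after all. *)

Set Implicit Arguments.
Unset Strict Implicit.
Unset Printing Implicit Defensive.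

Section Dnf.
Variable n : nat.
Implicit Types (f g : dnf n) (T : term n) (x y : point n) (j : 'I_n).

Lemma flip_id x j (a : 'I_n) : a != j -> flip x j a = x a.
Proof. by rewrite ffunE => /negbTE ->. Qed.

Lemma flip_at x j : flip x j j = ~~ x j.
Proof. by rewrite ffunE eqxx. Qed.

Lemma term_sat_lit x T l : term_sat x T -> l \in T -> x l.1 = l.2.
Proof. by move=> /forallP/(_ l)/implyP + lT => /(_ lT)/eqP. Qed.

Lemma term_sat_flip x j T :
  (forall c, (j, c) \notin T) -> term_sat (flip x j) T = term_sat x T.
Proof.
move=> noj; apply: eq_forallb => l; apply: implyb_id2l => lT.
rewrite /lit_sat flip_id //; apply: contraNneq (noj l.2) => <-.
by rewrite -surjective_pairing.
Qed.

Lemma dnf_eval_subset g f x : g \subset f -> dnf_eval g x -> dnf_eval f x.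
Proof.
move=> /subsetP gf /existsP[T /andP[Tg Tx]].
by apply/existsP; exists T; rewrite gf.
Qed.

Lemma dnf_gt_subset f L : dnf_gt f L \subset f.
Proof. by apply/subsetP => T; rewrite inE => /andP[]. Qed.

Lemma dnf_eval_sweep f (pi : {perm 'I_n}) y t :
  dnf_eval f y -> dnf_eval f (sweep f pi y t).
Proof.
move=> fy; elim: t => [|t IH] //=.
by case: (insub t) => [s|] //=; case: ifP.
Qed.

Lemma term_sat_protected f x y T :
  {in protected f y, forall a, x a = y a} ->
  T \in f -> term_sat x T -> term_sat y T.
Proof.
move=> xy Tf xT; apply/negPn/negP => yNT.
have [l0 l0T l0N] : exists2 l, l \in T & ~~ lit_sat y l.
  by apply/exists_inP; rewrite -negb_forall_in.
pose falsified m := [exists l in T, ~~ lit_sat y l && (val l.1 == m)].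
have ex_falsified : exists m, falsified m.
  by exists (val l0.1); apply/exists_inP; exists l0; rewrite // l0N eqxx.
case: (ex_minnP ex_falsified) => m /exists_inP[l lT /andP[lN /eqP lm]] m_min.
have l_prot : l.1 \in protected f y.
  rewrite inE; apply/exists_inP; exists T => //; apply/and3P; split => //.
    by apply/existsP; exists l.2; rewrite -surjective_pairing lT.
  apply/forall_inP => l' l'T; apply/implyP => l'N.
  by rewrite lm; apply: m_min; apply/exists_inP; exists l'; rewrite // l'N eqxx.
by move: lN; rewrite /lit_sat -xy // (term_sat_lit xT lT) eqxx.
Qed.

Lemma unanimous_sat_terms f x j T :
  j \in unanimous (sat_terms f x) -> T \in sat_terms f x -> (j, x j) \in T.
Proof.
move=> jU Tx; have xT : term_sat x T by move: Tx; rewrite inE => /andP[].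
by move: jU; rewrite inE => /orP[] /forall_inP/(_ T Tx) jT;
  have /= -> := term_sat_lit xT jT.
Qed.

End Dnf.

Theorem lemma4p10 (n : nat) (f : dnf n) (k : nat) (y : point n) :
  #|f| = k ->
  dnf_eval (dnf_gt f (1000 * k)) y ->
  ~~ dnf_eval (dnf_le f (1000 * k)) y ->
  forall (pi : {perm 'I_n}) (i : nat), i <= n ->
  (forall a, a \in protected f y -> sweep f pi y i a = y a) ->
  forall j : 'I_n,
    j \in unanimous (sat_terms f (sweep f pi y i)) :\: protected f y ->
    ~~ dnf_eval f (flip (sweep f pi y i) j).
Proof.
move=> _ y_gt _ pi i _ zy j; set z := sweep f pi y i.
rewrite inE => /andP[jNP jU].
have fz : dnf_eval f z.
  exact/dnf_eval_sweep/(dnf_eval_subset (dnf_gt_subset f _) y_gt).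
have yj : y j = z j.
  have /exists_inP[T Tf zT] := fz.
  have Tz : T \in sat_terms f z by rewrite inE Tf.
  exact: term_sat_lit (term_sat_protected zy Tf zT) (unanimous_sat_terms jU Tz).
have flip_y : {in protected f y, forall a, flip z j a = y a}.
  by move=> a aP; rewrite flip_id ?zy //; apply: contraNneq jNP => <-.
apply/exists_inP => -[T Tf zjT].
have noj c : (j, c) \notin T.
  apply/negP => jT; have := term_sat_lit (term_sat_protected flip_y Tf zjT) jT.
  by rewrite -(term_sat_lit zjT jT) flip_at yj /=; case: (z j).
have Tz : T \in sat_terms f z by rewrite inE Tf -(term_sat_flip _ noj).
by have := noj (z j); rewrite (unanimous_sat_terms jU Tz).
Qed.
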